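(* Let $\alpha,\gamma,\mu,\delta,\rho>0$ and consider, for a parameter $b>0$, the system \[ \dot P=P\big[(b-\mu)-2bP+(\delta-b)A\big],\qquad \dot A=-(2\delta P+\rho)A \] on $\mathcal F=\{(P,A): P\ge0,\ A\ge0,\ 2P+A\le1\}$, with centrist share $C=1-2P-A$. Suppose that before time $t_0$ the parameter is $b=\beta_0$ with $\beta_0<\mu$, and let $(P(t_0^-),A(t_0^-))\in\mathcal F$ be the state at $t_0$. A structural shock $(\Delta,\Delta\beta)$ with $\Delta\in[0,1]$ at $t_0$ sets $P(t_0^+)=P(t_0^-)$, $C(t_0^+)=(1-\Delta)C(t_0^-)$, $A(t_0^+)=A(t_0^-)+\Delta C(t_0^-)$, and for $t>t_0$ the system evolves with parameter $b=\beta':=\beta_0+\Delta\beta>0$. If $P(t_0^-)>0$, then $\lim_{t\to\infty}C(t)<1$ (a permanent shift of the long-run equilibrium) if and only if $\beta_0+\Delta\beta>\mu$; in that case \[ \lim_{t\to\infty}C(t)=C^\infty=\frac{\mu}{\beta_0+\Delta\beta}<1, \] which does not depend on $\Delta$ (and if $\beta_0+\Delta\beta\le\mu$ then $C(t)\to1$). If $P(t_0^-)=0$, then $P(t)\equiv0$ for all $t>t_0$ regardless of $\Delta\beta$, and $(P(t),A(t))\to(0,0)$.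
   Context: This is the symmetric reduction ($L=R=P$) of a four-group voter model (left-radical, right-radical, centrist, disengaged) with $b=\alpha+\gamma$ the combined recruitment/reactive-polarisation rate, $\mu$ deradicalisation rate, $\delta$ mobilisation rate of disengaged voters, $\rho$ re-engagement rate. *)

From Stdlib Require Import Reals.
From Coquelicot Require Import Coquelicot.
Open Scope R_scope.

Definition in_F (P A : R) : Prop := 0 <= P /\ 0 <= A /\ 2 * P + A <= 1.

Definition centrist (P A : R) : R := 1 - 2 * P - A.

Definition fP (b mu delta : R) (P A : R) : R :=
  P * ((b - mu) - 2 * b * P + (delta - b) * A).
Definition fA (delta rho : R) (P A : R) : R :=
  - (2 * delta * P + rho) * A.

Definition post_shock_solution (b mu delta rho t0 P1 A1 : R) (P A : R -> R) : Prop :=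
  P t0 = P1 /\ A t0 = A1 /\
  filterlim P (at_right t0) (locally P1) /\
  filterlim A (at_right t0) (locally A1) /\
  (forall t, t0 < t -> is_derive P t (fP b mu delta (P t) (A t))) /\
  (forall t, t0 < t -> is_derive A t (fA delta rho (P t) (A t))).

From Stdlib Require Import Reals Lra Psatz.
From Coquelicot Require Import Coquelicot.
Open Scope R_scope.

(* Each of P and A solves a linear equation y' = y g with continuous g, so
   y = K exp (int g): the sign of P just after the shock persists, and P vanishes
   identically when P(t0+) = 0.  As long as P >= 0, A^2 decays at rate at least 2 rho,
   so A -> 0.  When P > 0, u = 1/P solves the affine equation u' = 2b - c(t) u with
   c(t) = (b - mu) + (delta - b) A(t) -> b - mu, so u -> 2b / (b - mu) if b > mu and
   u -> +oo otherwise.  Hence P -> max(b - mu, 0) / (2b) and C = 1 - 2P - A tends to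
   min(mu / b, 1), whatever Delta is. *)

Lemma is_derive_Rmult (f g : R -> R) x df dg :
  is_derive f x df -> is_derive g x dg ->
  is_derive (fun t => f t * g t) x (df * g x + f x * dg).
Proof. intros Hf Hg. exact (is_derive_mult f g x df dg Hf Hg Rmult_comm). Qed.

Lemma is_derive_exp_comp (f : R -> R) x l :
  is_derive f x l -> is_derive (fun t => exp (f t)) x (l * exp (f x)).
Proof. intros H. exact (is_derive_comp exp f x (exp (f x)) l (is_derive_exp (f x)) H). Qed.

Lemma is_derive_sqr_sub (f : R -> R) x l m :
  is_derive f x l -> is_derive (fun t => (f t - m) ^ 2) x (2 * (f x - m) * l).
Proof.
  intros H.
  apply is_derive_ext with (fun t => (f t - m) * (f t - m)); [intros t; simpl; ring |].
  replace (2 * (f x - m) * l) with ((l - 0) * (f x - m) + (f x - m) * (l - 0)) by ring.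
  apply (is_derive_Rmult (fun t => f t - m) (fun t => f t - m));
    apply (is_derive_minus f (fun _ => m)); auto using is_derive_const.
Qed.

Lemma is_derive_continuity_pt (f : R -> R) x l : is_derive f x l -> continuity_pt f x.
Proof.
  intros H. apply continuity_pt_filterlim.
  apply (ex_derive_continuous (K := R_AbsRing) (V := R_NormedModule)). now exists l.
Qed.

Lemma Rabs_lt_of_sqr_lt (x e : R) : 0 < e -> x ^ 2 < e ^ 2 -> Rabs x < e.
Proof.
  intros He H. rewrite <- (Rabs_pos_eq e) by lra.
  apply Rsqr_lt_abs_0. unfold Rsqr. lra.
Qed.

Lemma filterlim_near {F : (R -> Prop) -> Prop} {FF : Filter F} (f : R -> R) (l eps : R) :
  filterlim f F (locally l) -> 0 < eps -> F (fun t => Rabs (f t - l) < eps).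
Proof. intros Hf Heps. exact (Hf _ (locally_ball l (mkposreal eps Heps))). Qed.

Lemma at_right_between (a b : R) : a < b -> at_right a (fun t => a < t < b).
Proof.
  intros Hab. assert (Hba : 0 < b - a) by lra.
  exists (mkposreal _ Hba). intros t Ht Hat.
  change (Rabs (t - a) < b - a) in Ht. apply Rabs_def2 in Ht. lra.
Qed.

Lemma is_lim_p_infty_near (f : R -> R) (l eps : R) :
  is_lim f p_infty l -> 0 < eps -> Rbar_locally p_infty (fun t => Rabs (f t - l) < eps).
Proof. intros H Heps. apply is_lim_spec in H. exact (H (mkposreal eps Heps)). Qed.

Lemma nonincreasing_of_derive_nonpos (f df : R -> R) a :
  (forall t, a < t -> is_derive f t (df t)) -> (forall t, a < t -> df t <= 0) ->
  forall s t, a < s -> s <= t -> f t <= f s.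
Proof.
  intros Hd Hneg s t Hs Hst.
  destruct (MVT_gen f s t df) as [c [Hc Hmvt]].
  - intros x Hx. rewrite Rmin_left in Hx by lra. apply Hd. lra.
  - intros x Hx. rewrite Rmin_left in Hx by lra.
    apply (is_derive_continuity_pt f x (df x)), Hd. lra.
  - rewrite Rmin_left, Rmax_right in Hc by lra.
    assert (df c <= 0) by (apply Hneg; lra). nra.
Qed.

Lemma constant_of_derive_0 (f : R -> R) a :
  (forall t, a < t -> is_derive f t 0) -> forall s t, a < s -> a < t -> f t = f s.
Proof.
  intros Hd s t Hs Ht.
  assert (Ha : a < Rmin s t) by (apply Rmin_glb_lt; lra).
  destruct (MVT_gen f s t (fun _ => 0)) as [c [_ Hmvt]].
  - intros x Hx. apply Hd. lra.
  - intros x Hx. apply (is_derive_continuity_pt f x 0), Hd. lra.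
  - lra.
Qed.

Lemma is_derive_RInt_right (g : R -> R) t0 s :
  t0 < s -> (forall t, t0 < t -> continuous g t) ->
  forall t, t0 < t -> is_derive (fun u => RInt g s u) t (g t).
Proof.
  intros Hs Hc t Ht.
  apply (is_derive_RInt g (fun u => RInt g s u) s t); [| now apply Hc].
  assert (Hr : 0 < t - t0) by lra.
  exists (mkposreal _ Hr). intros u Hu.
  change (Rabs (u - t) < t - t0) in Hu. apply Rabs_def2 in Hu.
  apply (RInt_correct (V := R_CompleteNormedModule)), ex_RInt_continuous.
  intros z Hz. apply Hc.
  assert (t0 < Rmin s u) by (apply Rmin_glb_lt; lra). lra.
Qed.

Lemma eventually_lt_of_derive_le (w dw : R -> R) (k m d : R) :
  0 < k -> 0 < d ->
  Rbar_locally p_infty (fun t => is_derive w t (dw t) /\ dw t <= - k * (w t - m)) ->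
  Rbar_locally p_infty (fun t => w t < m + d).
Proof.
  intros Hk Hd [T HT].
  set (h := fun t => (w t - m) * exp (k * t)).
  assert (Hh : forall s t, T < s -> s <= t -> h t <= h s).
  { apply (nonincreasing_of_derive_nonpos h (fun t => (dw t + k * (w t - m)) * exp (k * t)) T).
    - intros t Ht.
      replace ((dw t + k * (w t - m)) * exp (k * t))
        with ((dw t - 0) * exp (k * t) + (w t - m) * (k * exp (k * t))) by ring.
      apply (is_derive_Rmult (fun t => w t - m) (fun t => exp (k * t))).
      + apply (is_derive_minus w (fun _ => m)); [apply HT, Ht |].
        exact (is_derive_const (K := R_AbsRing) m t).
      + auto_derive; [easy | ring].
    - intros t Ht. destruct (HT t Ht) as [_ Hle].
      assert (0 < exp (k * t)) by apply exp_pos. nra. }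
  set (D := Rmax 0 (h (T + 1))).
  exists (Rmax (T + 1) (D / (d * k))). intros t Ht.
  assert (HtT : T + 1 < t) by exact (Rle_lt_trans _ _ _ (Rmax_l _ _) Ht).
  assert (HtD : D / (d * k) < t) by exact (Rle_lt_trans _ _ _ (Rmax_r _ _) Ht).
  assert (Hht : h t <= D)
    by (apply Rle_trans with (h (T + 1)); [apply Hh; lra | apply Rmax_r]).
  assert (HDt : D < d * (k * t)).
  { apply Rmult_lt_compat_l with (r := d * k) in HtD; [| nra].
    replace (d * k * (D / (d * k))) with D in HtD by (field; lra). lra. }
  assert (Hexp : k * t < exp (k * t)) by (pose proof (exp_ineq1_le (k * t)); lra).
  assert (HE : 0 < exp (k * t)) by apply exp_pos.
  unfold h in Hht. nra.
Qed.

Section LinearODE.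

Variables (y g : R -> R) (t0 : R).
Hypothesis y_deriv : forall t, t0 < t -> is_derive y t (y t * g t).
Hypothesis g_cont : forall t, t0 < t -> continuous g t.

Lemma linear_ode_exp_repr s :
  t0 < s -> exists K, forall t, t0 < t -> y t = K * exp (RInt g s t).
Proof.
  intros Hs.
  set (h := fun t => y t * exp (- RInt g s t)).
  assert (Hh : forall t, t0 < t -> is_derive h t 0).
  { intros t Ht.
    replace 0 with (y t * g t * exp (- RInt g s t) + y t * (- g t * exp (- RInt g s t)))
      by ring.
    apply (is_derive_Rmult y (fun u => exp (- RInt g s u))); [now apply y_deriv |].
    apply (is_derive_exp_comp (fun u => - RInt g s u)), (is_derive_opp (fun u => RInt g s u)).
    now apply (is_derive_RInt_right g t0). }
  exists (h s). intros t Ht.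
  rewrite <- (constant_of_derive_0 h t0 Hh s t Hs Ht). unfold h.
  rewrite Rmult_assoc, <- exp_plus, Rplus_opp_l, exp_0. ring.
Qed.

Lemma linear_ode_pos t1 : t0 < t1 -> 0 < y t1 -> forall t, t0 < t -> 0 < y t.
Proof.
  intros Ht1 Hy1.
  destruct (linear_ode_exp_repr t1 Ht1) as [K HK].
  assert (HK0 : 0 < K).
  { rewrite (HK t1 Ht1) in Hy1. pose proof (exp_pos (RInt g t1 t1)). nra. }
  intros t Ht. rewrite (HK t Ht). apply Rmult_lt_0_compat; [exact HK0 | apply exp_pos].
Qed.

Lemma linear_ode_eq0 M :
  at_right t0 (fun t => Rabs (g t) <= M) ->
  filterlim y (at_right t0) (locally 0) ->
  forall t, t0 < t -> y t = 0.
Proof.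
  intros [d Hbound] Hlim.
  set (s := t0 + d / 2).
  assert (Hs : t0 < s) by (unfold s; pose proof (cond_pos d); lra).
  assert (Hg : forall t, t0 < t <= s -> Rabs (g t) <= M).
  { intros t Ht. apply Hbound; [| lra]. change (Rabs (t - t0) < d).
    rewrite Rabs_pos_eq; unfold s in Ht; lra. }
  assert (HM : 0 <= M)
    by (apply Rle_trans with (Rabs (g s)); [apply Rabs_pos | apply Hg; lra]).
  assert (Hexponent : forall t, t0 < t <= s -> - (d * M) <= RInt g s t).
  { intros t Ht.
    assert (Hint : Rabs (RInt g s t) <= Rabs (t - s) * M).
    { apply (norm_RInt_le_const_abs g s t).
      - intros x Hx. rewrite Rmin_right, Rmax_left in Hx by lra. apply Hg. lra.
      - apply (RInt_correct (V := R_CompleteNormedModule)), ex_RInt_continuous.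
        intros z Hz. rewrite Rmin_right in Hz by lra. apply g_cont. lra. }
    rewrite (Rabs_left1 (t - s)) in Hint by lra.
    assert (- (t - s) * M <= d * M) by (apply Rmult_le_compat_r; unfold s in *; lra).
    pose proof (Rle_abs (- RInt g s t)) as Habs. rewrite Rabs_Ropp in Habs. lra. }
  destruct (linear_ode_exp_repr s Hs) as [K HK].
  assert (HK0 : K = 0).
  { destruct (Req_dec K 0) as [| HKn]; [assumption | exfalso].
    set (eps := Rabs K * exp (- (d * M))).
    assert (Heps : 0 < eps)
      by (apply Rmult_lt_0_compat; [now apply Rabs_pos_lt | apply exp_pos]).
    destruct (filter_ex _ (filter_and _ _ (at_right_between t0 s Hs)
                (filterlim_near y 0 eps Hlim Heps))) as [t [Ht Hyt]].
    rewrite Rminus_0_r, (HK t (proj1 Ht)), Rabs_mult, (Rabs_pos_eq (exp _)) in Hyt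
      by (left; apply exp_pos).
    assert (exp (- (d * M)) <= exp (RInt g s t)).
    { apply Rnot_lt_le. intros Hlt. apply exp_lt_inv in Hlt.
      pose proof (Hexponent t ltac:(lra)). lra. }
    pose proof (Rabs_pos_lt K HKn). unfold eps in Hyt. nra. }
  intros t Ht. rewrite (HK t Ht), HK0. ring.
Qed.

End LinearODE.

Lemma affine_sqr_deviation_bound (e c cinf us k eta : R) :
  0 < k -> k <= c -> Rabs (c - cinf) < eta ->
  2 * e * (- c * e + (cinf - c) * us) <= - k * (e ^ 2 - (eta * us / k) ^ 2).
Proof.
  intros Hk Hkc Hc.
  assert (Hcross : (cinf - c) * (us * e) <= eta * Rabs (us * e)).
  { apply Rle_trans with (Rabs ((cinf - c) * (us * e))); [apply Rle_abs |].
    rewrite Rabs_mult, Rabs_minus_sym.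
    apply Rmult_le_compat_r; [apply Rabs_pos | lra]. }
  (* AM-GM: 2 eta |us e| <= k e^2 + (eta us)^2 / k *)
  assert (Hamgm : 2 * eta * Rabs (us * e) <= k * e ^ 2 + k * (eta * us / k) ^ 2).
  { replace (k * (eta * us / k) ^ 2) with ((eta * us) ^ 2 / k) by (field; lra).
    assert (Hsq : 0 <= (k * Rabs e - eta * Rabs us) ^ 2) by apply pow2_ge_0.
    assert (Habs : Rabs e ^ 2 = e ^ 2 /\ Rabs us ^ 2 = us ^ 2)
      by (split; apply pow2_abs).
    apply Rmult_le_reg_l with k; [exact Hk |].
    replace (k * (k * e ^ 2 + (eta * us) ^ 2 / k)) with (k ^ 2 * e ^ 2 + (eta * us) ^ 2)
      by (field; lra).
    rewrite Rabs_mult. nra. }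
  nra.
Qed.

Section AffineODE.

Variables (u c : R -> R) (T a cinf : R).
Hypothesis u_deriv : forall t, T < t -> is_derive u t (a - c t * u t).
Hypothesis c_lim : is_lim c p_infty cinf.

Lemma affine_ode_lim : 0 < cinf -> is_lim u p_infty (a / cinf).
Proof.
  intros Hcinf. apply is_lim_spec. intros eps.
  pose proof (cond_pos eps) as Heps.
  set (us := a / cinf). set (k := cinf / 2).
  set (eta := Rmin k (eps * k / (2 * Rabs us + 1))).
  assert (Hk : 0 < k) by (unfold k; lra).
  assert (Hus : 0 <= Rabs us) by apply Rabs_pos.
  assert (Heta : 0 < eta) by (apply Rmin_glb_lt; [lra | apply Rdiv_lt_0_compat; nra]).
  assert (Hm : (eta * us / k) ^ 2 <= eps ^ 2 / 4).
  { assert (Hr : eta * Rabs us <= eps * k / 2).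
    { apply Rle_trans with (eps * k / (2 * Rabs us + 1) * Rabs us).
      - apply Rmult_le_compat_r; [lra | apply Rmin_r].
      - apply Rmult_le_reg_r with (2 * Rabs us + 1); [lra |].
        replace (eps * k / (2 * Rabs us + 1) * Rabs us * (2 * Rabs us + 1))
          with (eps * k * Rabs us) by (field; lra).
        nra. }
    rewrite <- (pow2_abs (eta * us / k)), Rabs_div, Rabs_mult, (Rabs_pos_eq eta),
      (Rabs_pos_eq k) by lra.
    assert (Hq : eta * Rabs us / k <= eps / 2).
    { apply Rmult_le_reg_r with k; [lra |].
      replace (eta * Rabs us / k * k) with (eta * Rabs us) by (field; lra). lra. }
    assert (0 <= eta * Rabs us / k)
      by (apply Rmult_le_pos; [nra | apply Rlt_le, Rinv_0_lt_compat; lra]).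
    nra. }
  assert (Hev : Rbar_locally p_infty
                  (fun t => (u t - us) ^ 2 < (eta * us / k) ^ 2 + eps ^ 2 / 2)).
  { apply (eventually_lt_of_derive_le _ (fun t => 2 * (u t - us) * (a - c t * u t)) k);
      [exact Hk | nra |].
    apply filter_imp with (2 := filter_and _ _ (ex_intro _ T u_deriv)
                                   (is_lim_p_infty_near c cinf eta c_lim Heta)).
    intros t [Hu Hc]. split; [now apply is_derive_sqr_sub |].
    replace (a - c t * u t) with (- c t * (u t - us) + (cinf - c t) * us)
      by (unfold us; field; lra).
    apply affine_sqr_deviation_bound; [exact Hk | | exact Hc].
    assert (eta <= k) by apply Rmin_l. apply Rabs_def2 in Hc. unfold k in *. lra. }
  apply filter_imp with (2 := Hev). intros t Ht.
  apply Rabs_lt_of_sqr_lt; [exact Heps |]. nra.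
Qed.

Lemma affine_ode_lim_p_infty :
  0 < a -> cinf <= 0 -> (forall t, T < t -> 0 < u t) -> is_lim u p_infty p_infty.
Proof.
  intros Ha Hcinf Hpos. apply is_lim_spec. intros M.
  set (eta := a / (Rabs M + 2)).
  assert (HM : 0 < Rabs M + 2) by (pose proof (Rabs_pos M); lra).
  assert (Heta : 0 < eta) by (apply Rdiv_lt_0_compat; lra).
  assert (Haeta : a / eta = Rabs M + 2) by (unfold eta; field; lra).
  (* Eventually c <= eta, hence u' >= a - eta u. *)
  assert (Hev : Rbar_locally p_infty (fun t => - u t < - (a / eta) + 1)).
  { apply (eventually_lt_of_derive_le _ (fun t => - (a - c t * u t)) eta);
      [exact Heta | lra |].
    apply filter_imp
      with (2 := filter_and _ _ (ex_intro _ T (fun t Ht => conj (u_deriv t Ht) (Hpos t Ht)))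
                   (is_lim_p_infty_near c cinf eta c_lim Heta)).
    intros t [[Hu Hut] Hc]. split; [now apply (is_derive_opp u) |].
    apply Rabs_def2 in Hc.
    assert (c t * u t <= eta * u t) by (apply Rmult_le_compat_r; lra).
    replace (- eta * (- u t - - (a / eta))) with (eta * u t - eta * (a / eta)) by ring.
    replace (eta * (a / eta)) with a by (field; lra). lra. }
  apply filter_imp with (2 := Hev). intros t Ht.
  pose proof (Rle_abs M). lra.
Qed.

End AffineODE.

Lemma Rmin_div_1_cases (mu b : R) :
  0 < b ->
  (Rmin (mu / b) 1 < 1 <-> mu < b) /\
  (mu < b -> Rmin (mu / b) 1 = mu / b) /\
  (b <= mu -> Rmin (mu / b) 1 = 1).
Proof.
  intros Hb.
  assert (Hlt : mu < b -> Rmin (mu / b) 1 = mu / b /\ mu / b < 1).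
  { intros Hlt. assert (mu / b < 1) by (apply (Rdiv_lt_1 mu b Hb); lra).
    split; [apply Rmin_left |]; lra. }
  assert (Hle : b <= mu -> Rmin (mu / b) 1 = 1).
  { intros Hle. apply Rmin_right. apply (Rle_div_r 1 mu b Hb). lra. }
  split; [split | split; [apply Hlt | exact Hle]].
  - intros H. destruct (Rlt_le_dec mu b) as [| Hbm]; [assumption |].
    rewrite (Hle Hbm) in H. lra.
  - intros H. apply Hlt in H. lra.
Qed.

Definition per_capita_growth (b mu delta P A : R) : R :=
  (b - mu) - 2 * b * P + (delta - b) * A.

Section PostShock.

Variables (b mu delta rho t0 : R) (P A : R -> R).
Hypothesis b_pos : 0 < b.
Hypothesis delta_pos : 0 < delta.
Hypothesis rho_pos : 0 < rho.
Hypothesis P_deriv : forall t, t0 < t -> is_derive P t (fP b mu delta (P t) (A t)).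
Hypothesis A_deriv : forall t, t0 < t -> is_derive A t (fA delta rho (P t) (A t)).

Let g t := per_capita_growth b mu delta (P t) (A t).

Lemma per_capita_growth_continuous t : t0 < t -> continuous g t.
Proof.
  intros Ht. apply (ex_derive_continuous (K := R_AbsRing) (V := R_NormedModule)).
  unfold g, per_capita_growth. auto_derive.
  split; [| split; [| easy]]; eexists; [apply P_deriv | apply A_deriv]; exact Ht.
Qed.

Lemma A_lim_0 : (forall t, t0 < t -> 0 <= P t) -> is_lim A p_infty 0.
Proof.
  intros Pnn. apply is_lim_spec. intros eps. pose proof (cond_pos eps) as Heps.
  apply filter_imp with (fun t => (A t - 0) ^ 2 < 0 + eps ^ 2).
  { intros t Ht. apply Rabs_lt_of_sqr_lt; lra. }
  apply (eventually_lt_of_derive_le _ (fun t => 2 * (A t - 0) * fA delta rho (P t) (A t))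
           (2 * rho)); [lra | nra |].
  exists t0. intros t Ht. split; [now apply is_derive_sqr_sub, A_deriv |].
  unfold fA. pose proof (Pnn t Ht). pose proof (pow2_ge_0 (A t)).
  assert (0 <= delta * P t * A t ^ 2) by (apply Rmult_le_pos; nra). nra.
Qed.

Lemma P_pos (Pm : R) :
  filterlim P (at_right t0) (locally Pm) -> 0 < Pm -> forall t, t0 < t -> 0 < P t.
Proof.
  intros HPlim HPm.
  assert (Ht01 : t0 < t0 + 1) by lra.
  destruct (filter_ex _ (filter_and _ _ (at_right_between t0 (t0 + 1) Ht01)
              (filterlim_near P Pm Pm HPlim HPm))) as [t1 [[Ht1 _] HP1]].
  apply Rabs_def2 in HP1.
  apply (linear_ode_pos P g t0 P_deriv per_capita_growth_continuous t1 Ht1). lra.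
Qed.

Lemma P_eq0 (A1 : R) :
  filterlim P (at_right t0) (locally 0) -> filterlim A (at_right t0) (locally A1) ->
  forall t, t0 < t -> P t = 0.
Proof.
  intros HPlim HAlim.
  apply (linear_ode_eq0 P g t0 P_deriv per_capita_growth_continuous
           (Rabs (b - mu) + Rabs (2 * b) + Rabs (delta - b) * (Rabs A1 + 1))); [| exact HPlim].
  apply filter_imp with (2 := filter_and _ _ (filterlim_near P 0 1 HPlim Rlt_0_1)
                                 (filterlim_near A A1 1 HAlim Rlt_0_1)).
  intros t [HPt HAt].
  rewrite Rminus_0_r in HPt.
  assert (HA : Rabs (A t) <= Rabs A1 + 1).
  { pose proof (Rabs_triang_inv (A t) A1). lra. }
  unfold g, per_capita_growth.
  eapply Rle_trans; [apply Rabs_triang |]. apply Rplus_le_compat.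
  - unfold Rminus at 2. eapply Rle_trans; [apply Rabs_triang |].
    rewrite Rabs_Ropp, Rabs_mult. apply Rplus_le_compat_l.
    pose proof (Rabs_pos (2 * b)). nra.
  - rewrite Rabs_mult. apply Rmult_le_compat_l; [apply Rabs_pos | exact HA].
Qed.

Lemma P_lim : (forall t, t0 < t -> 0 < P t) -> is_lim P p_infty (Rmax (b - mu) 0 / (2 * b)).
Proof.
  intros Ppos.
  set (c := fun t => (b - mu) + (delta - b) * A t).
  assert (Hc : is_lim c p_infty (b - mu)).
  { replace (b - mu) with ((b - mu) + (delta - b) * 0) by ring.
    apply (is_lim_plus' (fun _ => b - mu) (fun t => (delta - b) * A t));
      [apply is_lim_const |].
    apply (is_lim_scal_l A (delta - b) p_infty 0), A_lim_0.
    intros t Ht. now apply Rlt_le, Ppos. }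
  assert (Hu : forall t, t0 < t -> is_derive (fun t => / P t) t (2 * b - c t * / P t)).
  { intros t Ht. pose proof (Ppos t Ht).
    replace (2 * b - c t * / P t) with (- fP b mu delta (P t) (A t) / P t ^ 2)
      by (unfold fP, c; field; lra).
    apply is_derive_inv; [now apply P_deriv | lra]. }
  apply (is_lim_ext_loc (fun t => / / P t)); [exists t0; intros t _; apply Rinv_inv |].
  destruct (Rlt_le_dec 0 (b - mu)) as [Hgt | Hle].
  - rewrite Rmax_left by lra.
    replace (Finite ((b - mu) / (2 * b))) with (Rbar_inv (2 * b / (b - mu)))
      by (simpl; f_equal; field; lra).
    apply is_lim_inv; [exact (affine_ode_lim _ c t0 (2 * b) (b - mu) Hu Hc Hgt) |].
    intros H. injection H. apply Rgt_not_eq, Rdiv_lt_0_compat; lra.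
  - rewrite Rmax_right by lra. replace (0 / (2 * b)) with 0 by (field; lra).
    change (Finite 0) with (Rbar_inv p_infty).
    apply is_lim_inv; [| discriminate].
    apply (affine_ode_lim_p_infty _ c t0 (2 * b) (b - mu) Hu Hc); [lra | lra |].
    intros t Ht. now apply Rinv_0_lt_compat, Ppos.
Qed.

Lemma centrist_lim :
  (forall t, t0 < t -> 0 < P t) ->
  is_lim (fun t => centrist (P t) (A t)) p_infty (Rmin (mu / b) 1).
Proof.
  intros Ppos.
  replace (Rmin (mu / b) 1) with (1 - 2 * (Rmax (b - mu) 0 / (2 * b)) - 0).
  - unfold centrist.
    apply (is_lim_minus' (fun t => 1 - 2 * P t) A).
    + apply (is_lim_minus' (fun _ => 1) (fun t => 2 * P t)); [apply is_lim_const |].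
      exact (is_lim_scal_l P 2 p_infty _ (P_lim Ppos)).
    + apply A_lim_0. intros t Ht. now apply Rlt_le, Ppos.
  - destruct (Rlt_le_dec mu b) as [Hlt | Hle].
    + rewrite Rmax_left, (proj1 (proj2 (Rmin_div_1_cases mu b b_pos)) Hlt) by lra.
      field; lra.
    + rewrite Rmax_right, (proj2 (proj2 (Rmin_div_1_cases mu b b_pos)) Hle) by lra.
      field; lra.
Qed.

End PostShock.

Theorem theorem7p1
  (alpha gamma mu delta rho beta0 dbeta Delta t0 Pm Am : R)
  (P A : R -> R) :
  0 < alpha -> 0 < gamma -> 0 < mu -> 0 < delta -> 0 < rho ->
  0 < beta0 -> beta0 < mu ->
  0 < beta0 + dbeta ->
  0 <= Delta <= 1 ->
  in_F Pm Am ->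
  post_shock_solution (beta0 + dbeta) mu delta rho t0
    Pm (Am + Delta * centrist Pm Am) P A ->
  (0 < Pm ->
     exists Cinf : R,
       is_lim (fun t => centrist (P t) (A t)) p_infty Cinf /\
       (Cinf < 1 <-> mu < beta0 + dbeta) /\
       (mu < beta0 + dbeta -> Cinf = mu / (beta0 + dbeta)) /\
       (beta0 + dbeta <= mu -> Cinf = 1)) /\
  (Pm = 0 ->
     (forall t, t0 < t -> P t = 0) /\
     is_lim P p_infty 0 /\ is_lim A p_infty 0).
Proof.
  intros _ _ _ Hdelta Hrho _ _ Hb _ _ (_ & _ & HPlim & HAlim & HPd & HAd).
  split.
  - intros HPm.
    pose proof (P_pos _ _ _ _ _ _ _ HPd HAd _ HPlim HPm) as Ppos.
    exists (Rmin (mu / (beta0 + dbeta)) 1). split.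
    + exact (centrist_lim _ _ _ _ _ _ _ Hb Hdelta Hrho HPd HAd Ppos).
    + exact (Rmin_div_1_cases mu _ Hb).
  - intros HPm0. subst Pm.
    pose proof (P_eq0 _ _ _ _ _ _ _ HPd HAd _ HPlim HAlim) as HP0.
    split; [exact HP0 | split].
    + apply (is_lim_ext_loc (fun _ => 0)); [| apply is_lim_const].
      exists t0. intros t Ht. symmetry. now apply HP0.
    + apply (A_lim_0 _ _ _ P A Hdelta Hrho HAd).
      intros t Ht. rewrite (HP0 t Ht). lra.
Qed.
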